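(* Let $(L,\le,(\sqsubseteq_\alpha)_{\alpha<\kappa})$ be a model of Axioms 1–4 with $\kappa$ a limit ordinal. Let $\alpha<\kappa$, $x\in L$, $X\subseteq(x]_\alpha$, and let $y=\bigsqcup_\alpha X$. Then $y$ is the $\le$-least element of $[y]_\alpha$, and $y\sqsubseteq_{\alpha+1}z$ for all $z\in[y]_\alpha$.
   Context: Setting (model of Axioms 1–4). Let $(L,\le)$ be a complete lattice with join operation $\bigvee$ and least element $\perp$. Let $\kappa>0$ be an ordinal, and for each ordinal $\alpha<\kappa$ let $\sqsubseteq_\alpha$ be a preorder on $L$. Derived relations: - $x=_\alpha y$ means $x\sqsubseteq_\alpha y$ and $y\sqsubseteq_\alpha x$. - $x\sqsubset_\alpha y$ means $x\sqsubseteq_\alpha y$ and not $x=_\alpha y$. Derived sets, for $x\in L$ and $\alpha<\kappa$: - $(x]_\alpha=\{y\in L:\forall\beta<\alpha,\ x=_\beta y\}$. - $[x]_\alpha=\{y\in L: x=_\alpha y\}$. For a set $X$, $X\sqsubseteq_\alpha y$ means $x\sqsubseteq_\alpha y$ for all $x\in X$. The structure is a model of Axioms 1–4 if: - (A1) for all $\alpha<\beta<\kappa$, $x\sqsubseteq_\beta y$ implies $x=_\alpha y$; - (A2) $\bigcap_{\alpha<\kappa}=_\alpha$ is the identity relation on $L$; - (A3) for every $x\in L$, every $\alpha<\kappa$ and every $X\subseteq(x]_\alpha$ there is $y\in(x]_\alpha$ with $X\sqsubseteq_\alpha y$ such that for all $z\in(x]_\alpha$ with $X\sqsubseteq_\alpha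 z$ we have $y\sqsubseteq_\alpha z$ and $y\le z$; - (A4) for every nonempty $X\subseteq L$, every $\alpha<\kappa$ and every $y\in L$, if $y=_\alpha x$ for all $x\in X$ then $y=_\alpha\bigvee X$. The element $y$ of (A3) is unique and is denoted $\bigsqcup_\alpha X$ (relative to $(x]_\alpha$). *)

From Stdlib Require Import Classical.

(* Ordinals below kappa are represented by a type I with a strict
   well-order lt (its order type is kappa). *)
Definition well_order {I : Type} (lt : I -> I -> Prop) : Prop :=
  (forall a, ~ lt a a) /\
  (forall a b c, lt a b -> lt b c -> lt a c) /\
  (forall a b, lt a b \/ a = b \/ lt b a) /\
  well_founded lt.

(* kappa is a limit ordinal: nonzero (I inhabited) and no maximum. *)
Definition limit_type {I : Type} (lt : I -> I -> Prop) : Prop :=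
  inhabited I /\ forall a, exists b, lt a b.

Definition is_succ {I : Type} (lt : I -> I -> Prop) (a s : I) : Prop :=
  lt a s /\ forall c, lt a c -> ~ lt c s.

Definition complete_lattice {L : Type} (le : L -> L -> Prop)
  (sup : (L -> Prop) -> L) : Prop :=
  (forall x, le x x) /\
  (forall x y z, le x y -> le y z -> le x z) /\
  (forall x y, le x y -> le y x -> x = y) /\
  (forall X : L -> Prop,
     (forall u, X u -> le u (sup X)) /\
     (forall z, (forall u, X u -> le u z) -> le (sup X) z)).

Definition preorder {L : Type} (r : L -> L -> Prop) : Prop :=
  (forall x, r x x) /\ (forall x y z, r x y -> r y z -> r x z).

Section Derived.
Context {I L : Type} (lt : I -> I -> Prop) (pre : I -> L -> L -> Prop).

Definition eqa (a : I) (x y : L) : Prop := pre a x y /\ pre a y x.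

Definition lowerset (a : I) (x : L) : L -> Prop :=
  fun y => forall b, lt b a -> eqa b x y.

Definition cls (a : I) (x : L) : L -> Prop := fun y => eqa a x y.

(* y is the element of (A3) for X relative to (x]_a, i.e. y = \bigsqcup_a X *)
Definition is_bigsqcup (a : I) (x : L) (le : L -> L -> Prop)
  (X : L -> Prop) (y : L) : Prop :=
  lowerset a x y /\ (forall u, X u -> pre a u y) /\
  (forall z, lowerset a x z -> (forall u, X u -> pre a u z) ->
     pre a y z /\ le y z).
End Derived.

Definition model {I L : Type} (lt : I -> I -> Prop) (le : L -> L -> Prop)
  (sup : (L -> Prop) -> L) (pre : I -> L -> L -> Prop) : Prop :=
  well_order lt /\ inhabited I /\ complete_lattice le sup /\
  (forall a, preorder (pre a)) /\
  (forall a b x y, lt a b -> pre b x y -> eqa pre a x y) /\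
  (forall x y, (forall a, eqa pre a x y) -> x = y) /\
  (forall x a (X : L -> Prop), (forall u, X u -> lowerset lt pre a x u) ->
     exists y, is_bigsqcup lt pre a x le X y) /\
  (forall (X : L -> Prop) a y, (exists u, X u) ->
     (forall u, X u -> eqa pre a y u) -> eqa pre a y (sup X)).


(* The lower set (x]_a is closed under
      =_a (by Axiom 1 every =_a-step is also a =_b-step for b < a), so any
      z =_a y lies in (x]_a and is an ⊑_a-upper bound of X; the minimality
      clause of Axiom 3 then gives y ≤ z.

   2. For the successor s = a+1, the class [y]_a is contained in (y]_s,
      since the ordinals below s are those ≤ a.  Apply Axiom 3 to the empty
      family relative to (y]_s: the resulting element m is =_a y and ≤ y, so
      by part 1 and antisymmetry m = y.  Minimality of m = ⊔_s ∅ now says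
      y ⊑_s z for every z ∈ (y]_s, in particular for every z ∈ [y]_a. *)

Section SuccessorClasses.

Variables (I L : Type) (lt : I -> I -> Prop) (le : L -> L -> Prop)
  (pre : I -> L -> L -> Prop).

Hypothesis pre_preorder : forall a, preorder (pre a).

Hypothesis axiom1 : forall a b x y, lt a b -> pre b x y -> eqa pre a x y.

Lemma pre_trans (a : I) (u v w : L) : pre a u v -> pre a v w -> pre a u w.
Proof. apply (pre_preorder a). Qed.

Lemma eqa_refl (a : I) (u : L) : eqa pre a u u.
Proof. split; apply (pre_preorder a). Qed.

Lemma eqa_trans (a : I) (u v w : L) :
  eqa pre a u v -> eqa pre a v w -> eqa pre a u w.
Proof.
  intros [Huv Hvu] [Hvw Hwv].
  split; eapply pre_trans; eassumption.
Qed.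

(* (x]_a is closed under =_a: the =_a-step descends to every b < a. *)
Lemma lowerset_eqa_closed (a : I) (x y z : L) :
  lowerset lt pre a x y -> eqa pre a y z -> lowerset lt pre a x z.
Proof.
  intros Hy Hyz b Hb.
  apply eqa_trans with y; [exact (Hy b Hb) | exact (axiom1 _ _ _ _ Hb (proj1 Hyz))].
Qed.

Lemma bigsqcup_least_in_class (a : I) (x : L) (X : L -> Prop) (y z : L) :
  is_bigsqcup lt pre a x le X y -> cls pre a y z -> le y z.
Proof.
  intros [Hyx [HXy Hmin]] Hz.
  apply (Hmin z).
  - exact (lowerset_eqa_closed _ _ _ _ Hyx Hz).
  - intros u Hu. exact (pre_trans _ _ _ _ (HXy u Hu) (proj1 Hz)).
Qed.

Hypothesis lt_trichotomy : forall a b, lt a b \/ a = b \/ lt b a.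

Lemma cls_sub_succ_lowerset (a s : I) (y w : L) :
  is_succ lt a s -> cls pre a y w -> lowerset lt pre s y w.
Proof.
  intros [_ Hs] Hw b Hb.
  destruct (lt_trichotomy b a) as [Hba | [-> | Hab]].
  - exact (axiom1 _ _ _ _ Hba (proj1 Hw)).
  - exact Hw.
  - contradiction (Hs b Hab Hb).
Qed.

Hypothesis le_antisym : forall u v, le u v -> le v u -> u = v.

Hypothesis axiom3 : forall x a (X : L -> Prop),
  (forall u, X u -> lowerset lt pre a x u) ->
  exists y, is_bigsqcup lt pre a x le X y.

(* Part 2: an element that is ≤-least in its class [y]_a coincides with
   ⊔_{a+1} ∅ relative to (y]_{a+1}, hence lies ⊑_{a+1}-below its class. *)
Lemma least_in_class_succ_below (a s : I) (y : L) :
  is_succ lt a s -> (forall z, cls pre a y z -> le y z) ->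
  forall z, cls pre a y z -> pre s y z.
Proof.
  intros Hsucc Hleast z Hz.
  destruct (axiom3 y s (fun _ => False) (fun u Hu => False_ind _ Hu))
    as [m [Hm [_ Hmin]]].
  assert (Hym : cls pre a y m) by exact (Hm a (proj1 Hsucc)).
  assert (Hmy : le m y).
  { apply (Hmin y).
    - exact (cls_sub_succ_lowerset _ _ _ _ Hsucc (eqa_refl a y)).
    - contradiction. }
  assert (Hmy_eq : m = y) by exact (le_antisym _ _ Hmy (Hleast m Hym)).
  subst m.
  apply (Hmin z).
  - exact (cls_sub_succ_lowerset _ _ _ _ Hsucc Hz).
  - contradiction.
Qed.

End SuccessorClasses.

Theorem mainTheorem5 (I L : Type) (lt : I -> I -> Prop) (le : L -> L -> Prop)
  (sup : (L -> Prop) -> L) (pre : I -> L -> L -> Prop)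
  (Hmodel : model lt le sup pre) (Hlim : limit_type lt)
  (a : I) (x : L) (X : L -> Prop)
  (HX : forall u, X u -> lowerset lt pre a x u)
  (y : L) (Hy : is_bigsqcup lt pre a x le X y) :
  (cls pre a y y /\ forall z, cls pre a y z -> le y z) /\
  (forall s, is_succ lt a s -> forall z, cls pre a y z -> pre s y z).
Proof.
  destruct Hmodel as [[_ [_ [Htri _]]] [_ [[_ [_ [Hanti _]]]
    [Hpre [A1 [_ [A3 _]]]]]]].
  assert (Hleast : forall z, cls pre a y z -> le y z)
    by (intros z; exact (bigsqcup_least_in_class _ _ _ le _ Hpre A1 _ _ _ _ _ Hy)).
  split.
  - split; [exact (eqa_refl _ _ _ Hpre a y) | exact Hleast].
  - intros s Hsucc.
    exact (least_in_class_succ_below _ _ _ _ _ Hpre A1 Htri Hanti A3 a s y Hsucc Hleast).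
Qed.
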